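(* Suppose the weight sequence $\mathbf{w}$ has type II or III. Then there is a sequence $t_n\to0$ such that $\Pr{\tilde D_n\le(1-\mu+t_n)n}\to1$ as $n\to\infty$; that is, $\tilde D_n\le(1-\mu+o(1))n$ with probability tending to $1$.
   Context: A weight sequence $\mathbf{w}=(\omega_k)_{k\ge0}$ consists of non-negative reals with $\omega_0>0$ and $\omega_k>0$ for some $k\ge2$; $\mathcal{T}_n$ is the random plane tree with $n$ vertices drawn with probability proportional to $\prod_v\omega_{d^+(v)}$ ($n\equiv1\bmod\gcd\{i:\omega_i>0\}$), with root $o$. Let $\phi(z)=\sum_k\omega_kz^k$ with radius $\rho_\phi$, $\psi(t)=t\phi'(t)/\phi(t)$, $\nu=\lim_{t\nearrow\rho_\phi}\psi(t)$ when $\rho_\phi>0$. Type II: $\rho_\phi>0$, $0<\nu<1$, $\tau=\rho_\phi$. Type III: $\rho_\phi=0$, $\tau=\nu=0$. $\xi$ has law $\Pr{\xi=k}=\tau^k\omega_k/\phi(\tau)$, and $\mu=\mathbb{E}\xi=\min(\nu,1)$ (so $\mu=\nu$ in types II/III). Let $N_k$ be the number of vertices of $\mathcal{T}_n$ with outdegree $k$. $(\Omega_n)$ is a fixed deterministic sequence with $\Omega_n\to\infty$, $\Omega_n=o(n)$, such that for every $K_n\to\infty$ with $K_n\le\Omega_n$: $\sum_{k\le K_n}kN_k=\mu n+o_p(n)$ and $\sum_{k>K_n}kN_k=(1-\mu)n+o_p(n)$. $\tilde D_n$ is a random integer with the law of $d^+_{\mathcal{T}_n}(o)$ conditioned on $d^+_{\mathcal{T}_n}(o)>\Omega_n$.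 *)

From Stdlib Require Import Reals List Lia ClassicalEpsilon.
Import ListNotations.
Open Scope R_scope.

(** Plane (ordered, rooted) trees: a vertex with its ordered list of children. *)
Inductive ptree : Type := Node : list ptree -> ptree.

Definition outdeg (t : ptree) : nat := match t with Node ts => length ts end.

Fixpoint tsize (t : ptree) : nat :=
  match t with
  | Node ts => S ((fix f (l : list ptree) : nat :=
                     match l with [] => 0%nat | u :: r => (tsize u + f r)%nat end) ts)
  end.

Fixpoint tweight (w : nat -> R) (t : ptree) : R :=
  match t with
  | Node ts => w (length ts) *
      ((fix f (l : list ptree) : R :=
          match l with [] => 1 | u :: r => tweight w u * f r end) ts)
  end.

Fixpoint Ncount (k : nat) (t : ptree) : nat :=
  match t with
  | Node ts => ((if Nat.eqb (length ts) k then 1 else 0) +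
      (fix f (l : list ptree) : nat :=
         match l with [] => 0%nat | u :: r => (Ncount k u + f r)%nat end) ts)%nat
  end.

(** Enumeration of all plane forests with m vertices in total (fuel-based);
    the first tree has j vertices (1 <= j <= m), its children form a forest
    of j-1 vertices, and the remaining trees a forest of m-j vertices. *)
Fixpoint forests_f (fuel m : nat) : list (list ptree) :=
  match fuel with
  | O => []
  | S fu =>
      match m with
      | O => [ [] ]
      | S _ =>
          flat_map (fun j =>
            flat_map (fun f1 => map (fun rest => Node f1 :: rest) (forests_f fu (m - j)))
                     (forests_f fu (j - 1)))
          (seq 1 m)
      end
  end.

Definition forests (m : nat) : list (list ptree) := forests_f (S m) m.

Definition trees (n : nat) : list ptree :=
  match n with O => [] | S m => map Node (forests m) end.

(** Unnormalised weight of an event P for T_n: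
    sum over plane trees t with n vertices satisfying P of prod_v w_{d^+(v)}.
    Pr(T_n in P) = Wsum w n P / Wsum w n (fun _ => True). *)
Definition Wsum (w : nat -> R) (n : nat) (P : ptree -> Prop) : R :=
  fold_right Rplus 0
    (map (fun t => if excluded_middle_informative (P t) then tweight w t else 0)
         (trees n)).

Definition low_sum (K : nat) (t : ptree) : R :=
  fold_right Rplus 0 (map (fun k => INR k * INR (Ncount k t)) (seq 0 (S K))).

(** sum_{k > K} k N_k  (only k with K < k <= K + |t| can contribute, since
    outdegrees are < |t|; the sum ranges over K+1 .. K+|t|). *)
Definition high_sum (K : nat) (t : ptree) : R :=
  fold_right Rplus 0 (map (fun k => INR k * INR (Ncount k t)) (seq (S K) (tsize t))).

Definition weight_seq (w : nat -> R) : Prop :=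
  (forall k, 0 <= w k) /\ 0 < w 0%nat /\ exists k, (2 <= k)%nat /\ 0 < w k.

Definition phi_conv (w : nat -> R) (t : R) : Prop :=
  exists l, infinite_sum (fun k => w k * t ^ k) l.

Definition is_radius (w : nat -> R) (rho : R) : Prop :=
  (forall t, 0 <= t < rho -> phi_conv w t) /\ (forall t, t > rho -> ~ phi_conv w t).

(** psi(t) = t phi'(t) / phi(t) = (sum_k k w_k t^k) / (sum_k w_k t^k). *)
Definition psi_is (w : nat -> R) (t p : R) : Prop :=
  exists a b, infinite_sum (fun k => w k * t ^ k) a /\
              infinite_sum (fun k => INR k * w k * t ^ k) b /\ p = b / a.

Definition psi_lim_left (w : nat -> R) (rho nu : R) : Prop :=
  forall eps, eps > 0 -> exists delta, delta > 0 /\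
    forall t p, 0 < t -> rho - delta < t < rho -> psi_is w t p -> Rabs (p - nu) < eps.

Definition psi_lim_infty (w : nat -> R) (nu : R) : Prop :=
  forall eps, eps > 0 -> exists M, forall t p, t > M -> psi_is w t p -> Rabs (p - nu) < eps.

(** Type II with mu = nu: rho_phi > 0 and 0 < nu < 1. *)
Definition typeII (w : nat -> R) (nu : R) : Prop :=
  0 < nu < 1 /\
  ((exists rho, 0 < rho /\ is_radius w rho /\ psi_lim_left w rho nu) \/
   ((forall t, 0 <= t -> phi_conv w t) /\ psi_lim_infty w nu)).

Definition typeIII (w : nat -> R) : Prop :=
  forall t, 0 < t -> ~ phi_conv w t.

Definition nat_to_infty (a : nat -> nat) : Prop :=
  forall M, exists N, forall n, (N <= n)%nat -> (M <= a n)%nat.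

From Stdlib Require Import Reals List ClassicalEpsilon Lia Lra.
Import ListNotations.
Open Scope R_scope.

(* By Lagrange inversion for simply generated trees, the root degree D of T_n satisfies
   the exact identity k E[N_k] = (n - 1) P(D = k): as sums of tree weights both sides
   equal k w_k [z^(n-1-k)] phi(z)^(n-1).  Summing over k > K gives
   (n - 1) P(D > K) = E[sum_(k > K) k N_k].  This sum is concentrated at (1 - mu) n, so
   Markov's inequality keeps P(D > Omega_n) above (1 - mu) / 4; on the other hand it
   dominates D on {D > K}, so {D > (1 - mu + eps) n} forces a deviation of order eps n,
   which has vanishing probability.  Hence P(D > (1 - mu + eps) n | D > Omega_n) -> 0 for
   each fixed eps, and a diagonal choice eps = t_n -> 0 gives the statement. *)

(** * Finite sums *)

Fixpoint rsum (n : nat) (g : nat -> R) : R :=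
  match n with O => 0 | S n' => rsum n' g + g n' end.

Lemma rsum_ext n g h : (forall i, (i < n)%nat -> g i = h i) -> rsum n g = rsum n h.
Proof.
 induction n; simpl; intros H; [reflexivity|]. rewrite IHn by (intros; apply H; lia).
 rewrite H by lia. reflexivity.
Qed.

Lemma rsum_add n g h : rsum n (fun i => g i + h i) = rsum n g + rsum n h.
Proof.
 induction n; simpl; [lra|]. rewrite IHn. lra.
Qed.

Lemma rsum_mull n c g : rsum n (fun i => c * g i) = c * rsum n g.
Proof.
 induction n; simpl; [lra|]. rewrite IHn. lra.
Qed.

Lemma rsum_mulr n c g : rsum n (fun i => g i * c) = rsum n g * c.
Proof.
 induction n; simpl; [lra|]. rewrite IHn. lra.
Qed.

Lemma rsum_eq0 n g : (forall i, (i < n)%nat -> g i = 0) -> rsum n g = 0.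
Proof.
 intros H. rewrite (rsum_ext n g (fun _ => 0)) by auto. induction n; simpl; [lra|].
 rewrite IHn by (intros; apply H; lia). lra.
Qed.

Lemma rsum_shift n g : rsum (S n) g = g 0%nat + rsum n (fun i => g (S i)).
Proof.
 induction n; simpl in *; [lra|]. rewrite IHn. lra.
Qed.

Lemma rsum_trunc m n g :
  (m <= n)%nat -> (forall i, (m <= i < n)%nat -> g i = 0) -> rsum n g = rsum m g.
Proof.
 intros Hmn H. induction n; simpl.
 - assert (m = 0%nat) by lia. subst. reflexivity.
 - destruct (Nat.eq_dec m (S n)). subst. reflexivity.
   rewrite IHn by (try lia; intros; apply H; lia). rewrite H by lia. lra.
Qed.

Lemma rsum_rev n h : rsum n h = rsum n (fun i => h (n - 1 - i)%nat).
Proof.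
 induction n; [reflexivity|]. rewrite (rsum_shift n (fun i => h (S n - 1 - i)%nat)).
 change (rsum (S n) h) with (rsum n h + h n). rewrite IHn. rewrite Rplus_comm.
 replace (S n - 1 - 0)%nat with n by lia. f_equal. apply rsum_ext. intros. f_equal. lia.
Qed.

Lemma rsum_exchange n m f :
  rsum n (fun i => rsum m (fun j => f i j)) = rsum m (fun j => rsum n (fun i => f i j)).
Proof.
 induction n; simpl.
 - symmetry. apply rsum_eq0. reflexivity.
 - rewrite IHn. rewrite <- rsum_add. reflexivity.
Qed.

Lemma rsum_antidiag j f : rsum (S j) (fun d => rsum (S (j - d)) (fun e => f d e)) =
  rsum (S j) (fun s => rsum (S s) (fun d => f d (s - d)%nat)).
Proof.
 revert f. induction j; intros f.
 - simpl. lra.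
 - change (rsum (S (S j)) (fun d => rsum (S (S j - d)) (fun e => f d e))) with
     (rsum (S j) (fun d => rsum (S (S j - d)) (fun e => f d e)) + rsum (S (S j - S j)) (fun e => f (S j) e)).
   rewrite (rsum_ext (S j) _ (fun d => rsum (S (j - d)) (fun e => f d e) + f d (S j - d)%nat)).
   2:{ intros i Hi. replace (S j - i)%nat with (S (j - i)) by lia. simpl. reflexivity. }
   rewrite rsum_add, IHj.
   change (rsum (S (S j)) (fun s => rsum (S s) (fun d => f d (s - d)%nat))) with
     (rsum (S j) (fun s => rsum (S s) (fun d => f d (s - d)%nat)) + rsum (S (S j)) (fun d => f d (S j - d)%nat)).
   change (rsum (S (S j)) (fun d => f d (S j - d)%nat)) with (rsum (S j) (fun d => f d (S j - d)%nat) + f (S j) (S j - S j)%nat).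
   rewrite Nat.sub_diag. change (rsum 1 (fun e => f (S j) e)) with (0 + f (S j) 0%nat). lra.
Qed.

Lemma rsum_triangle_exchange j f : rsum (S j) (fun d => rsum (S (j - d)) (fun e => f d e)) =
  rsum (S j) (fun e => rsum (S (j - e)) (fun d => f d e)).
Proof.
 rewrite rsum_antidiag. rewrite (rsum_antidiag j (fun e d => f d e)). apply rsum_ext. intros s Hs.
 rewrite rsum_rev. apply rsum_ext. intros i Hi. f_equal; lia.
Qed.

Lemma rsum_indicator n i0 c : (i0 < n)%nat -> rsum n (fun i => if Nat.eqb i i0 then c else 0) = c.
Proof.
 induction n; intros H; [lia|]. simpl. destruct (Nat.eq_dec i0 n).
 - subst. rewrite Nat.eqb_refl. rewrite rsum_eq0. lra. intros i Hi.
   destruct (Nat.eqb_spec i n); [lia|auto].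
 - rewrite IHn by lia. destruct (Nat.eqb_spec n i0); [lia|]. lra.
Qed.

Lemma rsum_indicator_sym n l c : (l < n)%nat -> rsum n (fun d => if Nat.eqb l d then c else 0) = c.
Proof.
 intros H.
 transitivity (rsum n (fun i => if Nat.eqb i l then c else 0)); [|apply rsum_indicator; auto].
 apply rsum_ext. intros i _. rewrite Nat.eqb_sym. reflexivity.
Qed.

Definition lsum {A} (l : list A) (g : A -> R) : R := fold_right Rplus 0 (map g l).

Lemma lsum_cons {A} x l (g : A -> R) : lsum (x :: l) g = g x + lsum l g. Proof. reflexivity.
Qed.

Lemma lsum_app {A} l1 l2 (g : A -> R) : lsum (l1 ++ l2) g = lsum l1 g + lsum l2 g.
Proof.
 induction l1; simpl; unfold lsum in *; simpl; [lra|]. rewrite IHl1. lra.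
Qed.

Lemma lsum_map {A B} (f : A -> B) l g : lsum (map f l) g = lsum l (fun x => g (f x)).
Proof.
 induction l; [reflexivity|]. rewrite map_cons, !lsum_cons, IHl. reflexivity.
Qed.

Lemma lsum_flat_map {A B} (f : A -> list B) l g :
  lsum (flat_map f l) g = lsum l (fun x => lsum (f x) g).
Proof.
 induction l; [reflexivity|]. simpl flat_map. rewrite lsum_app, lsum_cons, IHl. reflexivity.
Qed.

Lemma lsum_ext_in {A} l (g h : A -> R) : (forall x, In x l -> g x = h x) -> lsum l g = lsum l h.
Proof.
 induction l; intros H; [reflexivity|]. rewrite !lsum_cons, H, IHl; [reflexivity| |left; auto].
 intros; apply H; right; auto.
Qed.

Lemma lsum_eq0 {A} l (g : A -> R) : (forall x, In x l -> g x = 0) -> lsum l g = 0.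
Proof.
 induction l; intros H; [reflexivity|]. rewrite lsum_cons, H, IHl; [lra| |left;auto].
 intros; apply H; right; auto.
Qed.

Lemma lsum_add {A} l (g h : A -> R) : lsum l (fun x => g x + h x) = lsum l g + lsum l h.
Proof.
 induction l; [unfold lsum; simpl; lra|]. rewrite !lsum_cons, IHl. lra.
Qed.

Lemma lsum_mull {A} l c (g : A -> R) : lsum l (fun x => c * g x) = c * lsum l g.
Proof.
 induction l; [unfold lsum; simpl; lra|]. rewrite !lsum_cons, IHl. lra.
Qed.

Lemma lsum_mulr {A} l c (g : A -> R) : lsum l (fun x => g x * c) = lsum l g * c.
Proof.
 rewrite <- (Rmult_comm c). rewrite <- lsum_mull. apply lsum_ext_in. intros; lra.
Qed.

Lemma lsum_rsum {A} l n (g : A -> nat -> R) :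
  lsum l (fun x => rsum n (g x)) = rsum n (fun i => lsum l (fun x => g x i)).
Proof.
 induction l.
 - symmetry. apply rsum_eq0. reflexivity.
 - rewrite lsum_cons, IHl.
   rewrite (rsum_ext n (fun i => lsum (a :: l) (fun x => g x i)) (fun i => g a i + lsum l (fun x => g x i))) by reflexivity.
   rewrite rsum_add. reflexivity.
Qed.

Lemma lsum_exchange {A B} (l1 : list A) (l2 : list B) g :
  lsum l1 (fun x => lsum l2 (fun y => g x y)) = lsum l2 (fun y => lsum l1 (fun x => g x y)).
Proof.
 induction l1.
 - induction l2; [reflexivity|]. rewrite lsum_cons, <- IHl2. unfold lsum; simpl; lra.
 - rewrite lsum_cons, IHl1. rewrite <- lsum_add. reflexivity.
Qed.

Lemma lsum_le {A} l (g h : A -> R) : (forall x, In x l -> g x <= h x) -> lsum l g <= lsum l h.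
Proof.
 induction l; intros H; [unfold lsum; simpl; lra|]. rewrite !lsum_cons.
 assert (g a <= h a) by (apply H; left; auto).
 assert (lsum l g <= lsum l h) by (apply IHl; intros; apply H; right; auto). lra.
Qed.

Lemma lsum_nonneg {A} l (g : A -> R) : (forall x, In x l -> 0 <= g x) -> 0 <= lsum l g.
Proof.
 intros H. replace 0 with (lsum l (fun _ => 0)). apply lsum_le; auto.
 induction l; [reflexivity|]. rewrite lsum_cons, IHl; [lra|]. intros; apply H; right; auto.
Qed.

Lemma lsum_ge_term {A} l (g : A -> R) x :
  In x l -> (forall y, In y l -> 0 <= g y) -> g x <= lsum l g.
Proof.
 induction l; intros Hx H; [destruct Hx|]. rewrite lsum_cons. destruct Hx as [<-|Hx].
 - assert (0 <= lsum l g) by (apply lsum_nonneg; intros; apply H; right; auto). lra.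
 - assert (0 <= g a) by (apply H; left; auto).
   assert (g x <= lsum l g) by (apply IHl; auto; intros; apply H; right; auto). lra.
Qed.

Lemma lsum_seq a n g : lsum (seq a n) g = rsum n (fun i => g (a + i)%nat).
Proof.
 revert a. induction n; intros a; [reflexivity|]. simpl seq. rewrite lsum_cons, IHn, rsum_shift.
 replace (a + 0)%nat with a by lia. f_equal. apply rsum_ext. intros. f_equal. lia.
Qed.

Lemma lsum_seq_indicator D K m : (D < S m)%nat ->
  lsum (seq (S K) (S m)) (fun k => if Nat.eqb D k then 1 else 0) = if excluded_middle_informative (D > K)%nat then 1 else 0.
Proof.
 intros HD. rewrite lsum_seq. destruct (excluded_middle_informative (D > K)%nat) as [H|H].
 - transitivity (rsum (S m) (fun i => if Nat.eqb i (D - S K) then 1 else 0)); [|apply rsum_indicator; lia].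
   apply rsum_ext. intros i Hi.
   destruct (Nat.eqb_spec D (S K + i)), (Nat.eqb_spec i (D - S K)); try lia; reflexivity.
 - apply rsum_eq0. intros i _. destruct (Nat.eqb_spec D (S K + i)); [lia|reflexivity].
Qed.

(** * Plane forests *)

Fixpoint forest_weight (w : nat -> R) (l : list ptree) : R :=
  match l with [] => 1 | u :: r => tweight w u * forest_weight w r end.

Fixpoint forest_size (l : list ptree) : nat :=
  match l with [] => 0%nat | u :: r => (tsize u + forest_size r)%nat end.

Fixpoint forest_Ncount (k : nat) (l : list ptree) : nat :=
  match l with [] => 0%nat | u :: r => (Ncount k u + forest_Ncount k r)%nat end.

Lemma tweight_Node w ts : tweight w (Node ts) = w (length ts) * forest_weight w ts.
Proof.
 simpl; f_equal; try (induction ts; simpl; [reflexivity|]; rewrite IHts; reflexivity).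
Qed.

Lemma tsize_Node ts : tsize (Node ts) = S (forest_size ts).
Proof.
 simpl; f_equal; try (induction ts; simpl; [reflexivity|]; rewrite IHts; reflexivity).
Qed.

Lemma Ncount_Node k ts :
  Ncount k (Node ts) = ((if Nat.eqb (length ts) k then 1 else 0) + forest_Ncount k ts)%nat.
Proof.
 simpl; f_equal; try (induction ts; simpl; [reflexivity|]; rewrite IHts; reflexivity).
Qed.

Lemma forest_weight_cons w f1 rest :
  forest_weight w (Node f1 :: rest) = w (length f1) * forest_weight w f1 * forest_weight w rest.
Proof.
 change (forest_weight w (Node f1 :: rest)) with (tweight w (Node f1) * forest_weight w rest).
 rewrite tweight_Node. reflexivity.
Qed.

Lemma forest_Ncount_cons k f1 rest :
  forest_Ncount k (Node f1 :: rest) =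
    ((if Nat.eqb (length f1) k then 1 else 0) + forest_Ncount k f1 + forest_Ncount k rest)%nat.
Proof.
 change (forest_Ncount k (Node f1 :: rest)) with (Ncount k (Node f1) + forest_Ncount k rest)%nat.
 rewrite Ncount_Node. lia.
Qed.

Lemma length_le_forest_size l : (length l <= forest_size l)%nat.
Proof.
 induction l; simpl; [lia|]. destruct a. rewrite tsize_Node. lia.
Qed.

Lemma outdeg_lt_tsize t : (outdeg t < tsize t)%nat.
Proof.
 destruct t as [ts]. rewrite tsize_Node. simpl. pose proof (length_le_forest_size ts). lia.
Qed.

Lemma tweight_nonneg_aux w (Hw : forall k, 0 <= w k) N :
  forall t, (tsize t <= N)%nat -> 0 <= tweight w t.
Proof.
 induction N; intros [ts] Ht; rewrite tsize_Node in Ht; [lia|]. rewrite tweight_Node.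
 apply Rmult_le_pos; [apply Hw|]. assert (Hs : (forest_size ts <= N)%nat) by lia. clear Ht.
 induction ts; simpl; [lra|]. simpl in Hs. apply Rmult_le_pos; [apply IHN; lia| apply IHts; lia].
 Qed.

Lemma tweight_nonneg w (Hw : forall k, 0 <= w k) t : 0 <= tweight w t.
Proof.
 apply (tweight_nonneg_aux w Hw (tsize t)). lia.
Qed.

Lemma flat_map_ext_in {A B} (f g : A -> list B) l :
  (forall x, In x l -> f x = g x) -> flat_map f l = flat_map g l.
Proof.
 induction l; intros H; [reflexivity|]. simpl. rewrite H by (left; auto). rewrite IHl; auto.
 intros; apply H; right; auto.
Qed.

Lemma forests_f_SS fu m : forests_f (S fu) (S m) = flat_map (fun j =>
            flat_map (fun f1 => map (fun rest => Node f1 :: rest) (forests_f fu (S m - j)))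
                     (forests_f fu (j - 1))) (seq 1 (S m)).
Proof.
 reflexivity.
Qed.

Lemma forests_fuel_aux N :
  forall m, (m <= N)%nat -> forall a b, (m < a)%nat -> (m < b)%nat -> forests_f a m = forests_f b m.
Proof.
 induction N; intros m Hm a b Ha Hb.
 - assert (m = 0%nat) by lia. subst. destruct a, b; try lia. reflexivity.
 - destruct a, b; try lia. destruct m; [reflexivity|]. rewrite !forests_f_SS.
   apply flat_map_ext_in. intros j Hj. apply in_seq in Hj.
   rewrite (IHN (j-1)%nat ltac:(lia) a b ltac:(lia) ltac:(lia)).
   apply flat_map_ext_in. intros f1 _.
   rewrite (IHN (S m - j)%nat ltac:(lia) a b ltac:(lia) ltac:(lia)). reflexivity.
Qed.

Lemma forests_fuel fu m : (m < fu)%nat -> forests_f fu m = forests m.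
Proof.
 intros H. unfold forests. apply (forests_fuel_aux m); lia.
Qed.

Lemma forests_0 : forests 0 = [ [] ].
Proof.
 reflexivity.
Qed.

Lemma forests_S m : forests (S m) = flat_map (fun j =>
            flat_map (fun f1 => map (fun rest => Node f1 :: rest) (forests (S m - j)))
                     (forests (j - 1))) (seq 1 (S m)).
Proof.
 unfold forests at 1. rewrite forests_f_SS. apply flat_map_ext_in. intros j Hj. apply in_seq in Hj.
 rewrite (forests_fuel (S m) (j-1)) by lia. apply flat_map_ext_in. intros f1 _.
 rewrite (forests_fuel (S m) (S m - j)) by lia. reflexivity.
Qed.

Lemma in_forests_aux N :
  forall m, (m <= N)%nat -> forall f, In f (forests m) -> forest_size f = m /\ (length f <= m)%nat.
Proof.
 induction N; intros m Hm f Hf.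
 - assert (m = 0%nat) by lia. subst. rewrite forests_0 in Hf. destruct Hf as [<-|[]]. simpl. lia.
 - destruct m. rewrite forests_0 in Hf. destruct Hf as [<-|[]]. simpl. lia.
   rewrite forests_S in Hf. apply in_flat_map in Hf as [j [Hj Hf]]. apply in_seq in Hj.
   apply in_flat_map in Hf as [f1 [Hf1 Hf]]. apply in_map_iff in Hf as [rest [<- Hr]].
   destruct (IHN (j-1)%nat ltac:(lia) _ Hf1) as [E1 L1].
   destruct (IHN (S m - j)%nat ltac:(lia) _ Hr) as [E2 L2].
   change (forest_size (Node f1 :: rest)) with (tsize (Node f1) + forest_size rest)%nat.
   rewrite tsize_Node. simpl length. lia.
Qed.

Lemma in_forests m f : In f (forests m) -> forest_size f = m /\ (length f <= m)%nat.
Proof.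
 apply (in_forests_aux m). lia.
Qed.

Lemma in_trees n t : In t (trees n) -> tsize t = n /\ (outdeg t < n)%nat.
Proof.
 destruct n; simpl; [intros []|]. intros H. apply in_map_iff in H as [f [<- Hf]].
 apply in_forests in Hf. rewrite tsize_Node. simpl. lia.
Qed.

Lemma lsum_forests_S m g : lsum (forests (S m)) g =
  rsum (S m) (fun i => lsum (forests i) (fun f1 => lsum (forests (m - i)) (fun rest => g (Node f1 :: rest)))).
Proof.
 rewrite forests_S, lsum_flat_map, lsum_seq. apply rsum_ext. intros i Hi.
 replace (1 + i - 1)%nat with i by lia. replace (S m - (1 + i))%nat with (m - i)%nat by lia.
 rewrite lsum_flat_map. apply lsum_ext_in. intros. rewrite lsum_map. reflexivity.
Qed.

(** * Generating functions of forests *)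

Definition forest_gf (w : nat -> R) (r m : nat) : R :=
  lsum (forests m) (fun f => if Nat.eqb (length f) r then forest_weight w f else 0).

Definition forest_Ngf (w : nat -> R) (k r m : nat) : R :=
  lsum (forests m) (fun f => if Nat.eqb (length f) r then forest_weight w f * INR (forest_Ncount k f) else 0).

Definition tree_gf (w : nat -> R) (j : nat) : R :=
  match j with O => 0 | S j' => lsum (forests j') (fun f => w (length f) * forest_weight w f) end.

Definition tree_Ngf (w : nat -> R) (k j : nat) : R :=
  match j with
  | O => 0
  | S j' => lsum (forests j') (fun f => w (length f) * forest_weight w f *
              (INR (if Nat.eqb (length f) k then 1%nat else 0%nat) + INR (forest_Ncount k f)))
  end.

Lemma forest_gf_0 w m : forest_gf w 0 m = if Nat.eqb m 0 then 1 else 0.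
Proof.
 destruct m.
 - unfold forest_gf. rewrite forests_0. unfold lsum. simpl. lra.
 - unfold forest_gf. rewrite lsum_forests_S. simpl Nat.eqb. apply rsum_eq0. intros i _.
   apply lsum_eq0. intros f1 _. apply lsum_eq0. intros rest _. reflexivity.
Qed.

Lemma forest_Ngf_0 w k m : forest_Ngf w k 0 m = 0.
Proof.
 destruct m.
 - unfold forest_Ngf. rewrite forests_0. unfold lsum. simpl. lra.
 - unfold forest_Ngf. rewrite lsum_forests_S. apply rsum_eq0. intros i _.
   apply lsum_eq0. intros f1 _. apply lsum_eq0. intros rest _. reflexivity.
Qed.

Lemma forest_Ngf_empty w k r : forest_Ngf w k r 0 = 0.
Proof.
 unfold forest_Ngf. rewrite forests_0. unfold lsum. simpl. destruct r; simpl; lra.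
Qed.

Lemma forest_gf_van w r m : (m < r)%nat -> forest_gf w r m = 0.
Proof.
 intros H. unfold forest_gf. apply lsum_eq0. intros f Hf. apply in_forests in Hf as [_ Hl].
 destruct (Nat.eqb_spec (length f) r); [lia|reflexivity].
Qed.

Lemma forest_gf_rec w r m :
  forest_gf w (S r) m = rsum (S m) (fun j => tree_gf w j * forest_gf w r (m - j)).
Proof.
 destruct m.
 - unfold forest_gf. rewrite forests_0. simpl. unfold lsum. simpl. lra.
 - unfold forest_gf at 1. rewrite lsum_forests_S.
   rewrite (rsum_shift (S m) (fun j => tree_gf w j * forest_gf w r (S m - j))).
   replace (tree_gf w 0) with 0 by reflexivity. rewrite Rmult_0_l, Rplus_0_l. apply rsum_ext.
   intros i Hi. simpl (S m - S i)%nat.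
   rewrite (lsum_ext_in _ _ (fun f1 => (w (length f1) * forest_weight w f1) * forest_gf w r (m - i))).
   + rewrite lsum_mulr. reflexivity.
   + intros f1 _. unfold forest_gf. rewrite <- lsum_mull. apply lsum_ext_in. intros rest _.
     change (length (Node f1 :: rest)) with (S (length rest)). simpl Nat.eqb.
     rewrite forest_weight_cons.
     destruct (Nat.eqb (length rest) r); lra.
Qed.

Lemma forest_Ngf_rec w k r m :
  forest_Ngf w k (S r) m =
    rsum (S m) (fun j => tree_Ngf w k j * forest_gf w r (m - j) + tree_gf w j * forest_Ngf w k r (m - j)).
Proof.
 destruct m.
 - unfold forest_Ngf. rewrite forests_0. simpl. unfold lsum. simpl. lra.
 - unfold forest_Ngf at 1. rewrite lsum_forests_S.
   rewrite (rsum_shift (S m) (fun j => tree_Ngf w k j * forest_gf w r (S m - j) + tree_gf w j * forest_Ngf w k r (S m - j))).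
   replace (tree_gf w 0) with 0 by reflexivity. replace (tree_Ngf w k 0) with 0 by reflexivity.
   rewrite !Rmult_0_l, !Rplus_0_l. apply rsum_ext. intros i Hi. simpl (S m - S i)%nat.
   rewrite (lsum_ext_in _ _ (fun f1 => (w (length f1) * forest_weight w f1 * (INR (if Nat.eqb (length f1) k then 1%nat else 0%nat) + INR (forest_Ncount k f1))) * forest_gf w r (m - i)
        + (w (length f1) * forest_weight w f1) * forest_Ngf w k r (m - i))).
   + rewrite lsum_add, lsum_mulr, lsum_mulr. reflexivity.
   + intros f1 _. unfold forest_gf, forest_Ngf. rewrite <- !lsum_mull. rewrite <- lsum_add.
     apply lsum_ext_in. intros rest _.
     change (length (Node f1 :: rest)) with (S (length rest)). simpl Nat.eqb.
     rewrite forest_weight_cons, forest_Ncount_cons.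
     rewrite !plus_INR. destruct (Nat.eqb (length rest) r); lra.
Qed.

Lemma tree_gf_S w j J :
  (j <= J)%nat -> tree_gf w (S j) = rsum (S J) (fun d => w d * forest_gf w d j).
Proof.
 intros HJ. simpl tree_gf. unfold forest_gf.
 rewrite (rsum_ext _ _ (fun d => lsum (forests j) (fun f => w d * (if Nat.eqb (length f) d then forest_weight w f else 0))))
   by (intros; rewrite lsum_mull; reflexivity).
 rewrite <- lsum_rsum. apply lsum_ext_in. intros f Hf. apply in_forests in Hf as [_ Hl].
 rewrite (rsum_ext _ _ (fun d => if Nat.eqb (length f) d then w (length f) * forest_weight w f else 0)).
 - rewrite rsum_indicator_sym; [reflexivity|lia].
 - intros d _. destruct (Nat.eqb_spec (length f) d); [subst; reflexivity|lra].
Qed.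

Lemma tree_Ngf_S w k j J :
  (j <= J)%nat -> tree_Ngf w k (S j) =
    w k * forest_gf w k j + rsum (S J) (fun d => w d * forest_Ngf w k d j).
Proof.
 intros HJ. simpl tree_Ngf. unfold forest_gf, forest_Ngf.
 rewrite (rsum_ext _ _ (fun d => lsum (forests j) (fun f => w d * (if Nat.eqb (length f) d then forest_weight w f * INR (forest_Ncount k f) else 0))))
   by (intros; rewrite lsum_mull; reflexivity).
 rewrite <- lsum_rsum, <- lsum_mull, <- lsum_add. apply lsum_ext_in. intros f Hf.
 apply in_forests in Hf as [_ Hl].
 rewrite (rsum_ext _ _ (fun d => if Nat.eqb (length f) d then w (length f) * (forest_weight w f * INR (forest_Ncount k f)) else 0)).
 - rewrite rsum_indicator_sym by lia. destruct (Nat.eqb_spec (length f) k); simpl INR; subst; lra.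
 - intros d _. destruct (Nat.eqb_spec (length f) d); [subst; reflexivity|lra].
Qed.

Lemma forest_gf_conv w a b m :
  forest_gf w (a + b) m = rsum (S m) (fun i => forest_gf w a i * forest_gf w b (m - i)).
Proof.
 revert m. induction a as [|a IH]; intros m.
 - simpl (0 + b)%nat. rewrite rsum_shift. rewrite rsum_eq0.
   + rewrite forest_gf_0. simpl. rewrite Nat.sub_0_r. lra.
   + intros i _. rewrite forest_gf_0. simpl. lra.
 - simpl (S a + b)%nat. rewrite !forest_gf_rec.
   rewrite (rsum_ext _ _ (fun j => rsum (S (m - j)) (fun i => tree_gf w j * (forest_gf w a i * forest_gf w b (m - j - i)))))
     by (intros j _; rewrite IH, rsum_mull; reflexivity).
   rewrite rsum_antidiag.
   rewrite (rsum_ext (S m) (fun i => forest_gf w (S a) i * forest_gf w b (m - i)) (fun s => rsum (S s) (fun j => tree_gf w j * forest_gf w a (s - j) * forest_gf w b (m - s))))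
     by (intros s _; rewrite forest_gf_rec, rsum_mulr; reflexivity).
   apply rsum_ext. intros s Hs. apply rsum_ext. intros j Hj.
   replace (m - j - (s - j))%nat with (m - s)%nat by lia. ring.
Qed.

Lemma forest_Ngf_conv w k a b m :
  forest_Ngf w k (a + b) m =
    rsum (S m) (fun i => forest_Ngf w k a i * forest_gf w b (m - i) + forest_gf w a i * forest_Ngf w k b (m - i)).
Proof.
 revert m. induction a as [|a IH]; intros m.
 - simpl (0 + b)%nat. rewrite rsum_shift. rewrite rsum_eq0.
   + rewrite forest_gf_0, forest_Ngf_0. simpl. rewrite Nat.sub_0_r. lra.
   + intros i _. rewrite forest_gf_0, forest_Ngf_0. simpl. lra.
 - simpl (S a + b)%nat. rewrite forest_Ngf_rec.
   rewrite (rsum_ext _ _ (fun j => rsum (S (m - j)) (fun i => tree_Ngf w k j * (forest_gf w a i * forest_gf w b (m - j - i))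
        + tree_gf w j * (forest_Ngf w k a i * forest_gf w b (m - j - i) + forest_gf w a i * forest_Ngf w k b (m - j - i)))))
     by (intros j _; rewrite IH, forest_gf_conv; symmetry; rewrite rsum_add, !rsum_mull, rsum_add; reflexivity).
   rewrite rsum_antidiag.
   apply rsum_ext. intros s Hs. rewrite forest_Ngf_rec, forest_gf_rec, <- !rsum_mulr, <- rsum_add.
   apply rsum_ext. intros j Hj. replace (m - j - (s - j))%nat with (m - s)%nat by lia. ring.
Qed.

Lemma forest_gf_shift w r m :
  forest_gf w (S r) (S m) = rsum (S m) (fun d => w d * forest_gf w (d + r) m).
Proof.
 rewrite forest_gf_rec. rewrite (rsum_shift (S m) (fun j => tree_gf w j * forest_gf w r (S m - j))).
 replace (tree_gf w 0) with 0 by reflexivity. rewrite Rmult_0_l, Rplus_0_l.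
 rewrite (rsum_ext (S m) _ (fun j => rsum (S m) (fun d => w d * forest_gf w d j * forest_gf w r (m - j)))).
 2:{ intros j Hj. rewrite (tree_gf_S w j m) by lia. rewrite rsum_mulr. reflexivity. }
 rewrite rsum_exchange. apply rsum_ext. intros d _. rewrite forest_gf_conv, <- rsum_mull.
 apply rsum_ext. intros; ring.
Qed.

Lemma forest_Ngf_shift w k r m :
  forest_Ngf w k (S r) (S m) =
    w k * forest_gf w (k + r) m + rsum (S m) (fun d => w d * forest_Ngf w k (d + r) m).
Proof.
 rewrite forest_Ngf_rec.
 rewrite (rsum_shift (S m) (fun j => tree_Ngf w k j * forest_gf w r (S m - j) + tree_gf w j * forest_Ngf w k r (S m - j))).
 replace (tree_gf w 0) with 0 by reflexivity. replace (tree_Ngf w k 0) with 0 by reflexivity.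
 rewrite !Rmult_0_l, !Rplus_0_l.
 rewrite (rsum_ext (S m) _ (fun j => w k * (forest_gf w k j * forest_gf w r (m - j)) +
     rsum (S m) (fun d => w d * (forest_Ngf w k d j * forest_gf w r (m - j) + forest_gf w d j * forest_Ngf w k r (m - j))))).
 2:{ intros j Hj. simpl (S m - S j)%nat. rewrite (tree_gf_S w j m), (tree_Ngf_S w k j m) by lia.
     rewrite Rmult_plus_distr_r, <- !rsum_mulr, Rplus_assoc, <- rsum_add. f_equal; [ring|].
     apply rsum_ext; intros; ring. }
 rewrite rsum_add, rsum_mull, <- forest_gf_conv, rsum_exchange. f_equal. apply rsum_ext. intros d _.
 rewrite rsum_mull, <- forest_Ngf_conv. reflexivity.
Qed.

Lemma forest_Ngf_van w k m : forall r, (m < r + k)%nat -> forest_Ngf w k r m = 0.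
Proof.
 induction m; intros r H.
 - apply forest_Ngf_empty.
 - destruct r. apply forest_Ngf_0. rewrite forest_Ngf_shift. rewrite forest_gf_van by lia.
   rewrite rsum_eq0. lra.
   intros d _. rewrite IHm by lia. lra.
Qed.

(* [phi_pow_coef w n j] is the coefficient of [z^j] in [phi(z)^n]. *)
Fixpoint phi_pow_coef (w : nat -> R) (n j : nat) : R :=
  match n with O => if Nat.eqb j 0 then 1 else 0
  | S n' => rsum (S j) (fun d => w d * phi_pow_coef w n' (j - d)) end.

(* Coefficientwise form of (z d/dz) phi^(n+1) = (n+1) (z phi') phi^n. *)
Lemma phi_pow_coef_deriv w n j :
  INR j * phi_pow_coef w (S n) j =
    INR (S n) * rsum (S j) (fun d => INR d * w d * phi_pow_coef w n (j - d)).
Proof.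
 revert j. induction n; intros j.
 - change (phi_pow_coef w 1 j) with (rsum (S j) (fun d => w d * phi_pow_coef w 0 (j - d))).
   rewrite <- rsum_mull.
   replace (INR 1) with 1 by reflexivity. rewrite Rmult_1_l. apply rsum_ext. intros d Hd.
   simpl phi_pow_coef.
   destruct (Nat.eqb_spec (j - d) 0); [|lra]. replace d with j by lia. ring.
 - change (phi_pow_coef w (S (S n)) j) with (rsum (S j) (fun d => w d * phi_pow_coef w (S n) (j - d))).
   rewrite <- rsum_mull.
   rewrite (rsum_ext _ _ (fun d => INR d * w d * phi_pow_coef w (S n) (j - d) + w d * (INR (j - d) * phi_pow_coef w (S n) (j - d)))).
   2:{ intros d Hd. rewrite minus_INR by lia. ring. }
   rewrite rsum_add.
   rewrite (rsum_ext _ (fun d => w d * (INR (j - d) * phi_pow_coef w (S n) (j - d)))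
      (fun d => INR (S n) * rsum (S (j - d)) (fun e => w d * (INR e * w e * phi_pow_coef w n (j - d - e))))).
   2:{ intros d Hd. rewrite IHn, <- rsum_mull, <- rsum_mull, <- rsum_mull.
       apply rsum_ext; intros; ring. }
   rewrite rsum_mull, rsum_triangle_exchange.
   rewrite (rsum_ext _ (fun e => rsum (S (j - e)) (fun d => w d * (INR e * w e * phi_pow_coef w n (j - d - e))))
      (fun e => INR e * w e * phi_pow_coef w (S n) (j - e))).
   2:{ intros e He.
       change (phi_pow_coef w (S n) (j - e)) with (rsum (S (j - e)) (fun d => w d * phi_pow_coef w n (j - e - d))).
       rewrite <- rsum_mull. apply rsum_ext. intros d Hd.
       replace (j - d - e)%nat with (j - e - d)%nat by lia. ring. }
   rewrite (S_INR (S n)). ring.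
Qed.

Lemma forest_gf_cycle_lemma w m :
  forall r, (r <= m)%nat -> INR m * forest_gf w r m = INR r * phi_pow_coef w m (m - r).
Proof.
 induction m; intros r Hr.
 - assert (r = 0%nat) by lia. subst. simpl. lra.
 - destruct r as [|r'].
   + rewrite forest_gf_0. simpl (Nat.eqb (S m) 0). simpl INR at 2. lra.
   + rewrite forest_gf_shift. simpl (S m - S r')%nat. destruct (Nat.eq_dec m 0) as [Hm|Hm].
     * subst. assert (r' = 0%nat) by lia. subst. simpl. rewrite forest_gf_0. simpl. lra.
     * set (J := (m - r')%nat).
       assert (C1 : INR m * rsum (S m) (fun d => w d * forest_gf w (d + r') m) =
         rsum (S J) (fun d => INR d * w d * phi_pow_coef w m (J - d)) + INR r' * rsum (S J) (fun d => w d * phi_pow_coef w m (J - d))).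
       { rewrite <- rsum_mull. rewrite (rsum_trunc (S J) (S m)).
         - rewrite <- rsum_mull, <- rsum_add. apply rsum_ext. intros d Hd.
           rewrite Rmult_comm, Rmult_assoc, (Rmult_comm _ (INR m)), IHm by lia.
           replace (m - (d + r'))%nat with (J - d)%nat by (unfold J; lia). rewrite plus_INR. ring.
         - unfold J; lia.
         - intros d Hd. rewrite forest_gf_van by (unfold J in Hd; lia). ring. }
       apply (Rmult_eq_reg_l (INR m)); [|apply not_0_INR; auto].
       transitivity (INR (S m) * (INR m * rsum (S m) (fun d => w d * forest_gf w (d + r') m))); [ring|].
       rewrite C1, Rmult_plus_distr_l, <- phi_pow_coef_deriv.
       change (rsum (S J) (fun d => w d * phi_pow_coef w m (J - d))) with (phi_pow_coef w (S m) J).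
       unfold J. rewrite minus_INR by lia. rewrite !S_INR. ring.
Qed.

Lemma forest_Ngf_formula w k m :
  forall r, (r + k <= S m)%nat -> forest_Ngf w k r (S m) =
    INR r * w k * phi_pow_coef w m (S m - r - k).
Proof.
 induction m; intros r Hr.
 - destruct r as [|r']. rewrite forest_Ngf_0. simpl. lra.
   assert (r' = 0%nat /\ k = 0%nat) as [-> ->] by lia. rewrite forest_Ngf_shift. simpl.
   rewrite forest_gf_0, forest_Ngf_empty. simpl. lra.
 - destruct r as [|r']. rewrite forest_Ngf_0. simpl INR. lra.
   rewrite forest_Ngf_shift. set (m0 := S m). set (J := (S m0 - S r' - k)%nat).
   assert (C1 : INR m0 * rsum (S m0) (fun d => w d * forest_Ngf w k (d + r') m0) =
     w k * (INR m0 * rsum (S J) (fun d => INR d * w d * phi_pow_coef w m (J - d))) + w k * (INR m0 * INR r' * rsum (S J) (fun d => w d * phi_pow_coef w m (J - d)))).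
   { rewrite (rsum_trunc (S J) (S m0)).
     - rewrite <- !rsum_mull, <- rsum_add. apply rsum_ext. intros d Hd. unfold m0.
       rewrite IHm by (unfold J in Hd; lia).
       replace (S m - (d + r') - k)%nat with (J - d)%nat by (unfold J; lia). rewrite plus_INR. ring.
     - unfold J; lia.
     - intros d Hd. rewrite forest_Ngf_van by (unfold J in Hd; lia). ring. }
   apply (Rmult_eq_reg_l (INR m0)); [|apply not_0_INR; unfold m0; lia].
   rewrite Rmult_plus_distr_l. rewrite C1.
   transitivity (w k * (INR m0 * forest_gf w (k + r') m0) + w k * (INR m0 * rsum (S J) (fun d => INR d * w d * phi_pow_coef w m (J - d))) +
      w k * (INR m0 * INR r' * rsum (S J) (fun d => w d * phi_pow_coef w m (J - d)))); [ring|].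
   rewrite forest_gf_cycle_lemma by (unfold m0; lia).
   unfold m0. rewrite <- phi_pow_coef_deriv. fold m0.
   change (rsum (S J) (fun d => w d * phi_pow_coef w m (J - d))) with (phi_pow_coef w m0 J).
   replace (m0 - (k + r'))%nat with J by (unfold J, m0; lia).
   assert (HJ : INR J = INR m0 - INR r' - INR k).
   { unfold J. rewrite !minus_INR by (unfold m0 in *; lia). rewrite !S_INR. lra. }
   replace (S m0 - S r' - k)%nat with J by (unfold J; lia).
   rewrite HJ, plus_INR, !S_INR. ring.
Qed.

Lemma trees_Ncount_weight w k m :
  lsum (trees (S m)) (fun t => tweight w t * INR (Ncount k t)) = tree_Ngf w k (S m).
Proof.
 change (trees (S m)) with (map Node (forests m)). rewrite lsum_map. simpl tree_Ngf.
 apply lsum_ext_in. intros f _. rewrite tweight_Node, Ncount_Node, plus_INR. reflexivity.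
Qed.

Lemma trees_outdeg_weight w k m :
  lsum (trees (S m)) (fun t => tweight w t * (if Nat.eqb (outdeg t) k then 1 else 0)) =
    w k * forest_gf w k m.
Proof.
 change (trees (S m)) with (map Node (forests m)). rewrite lsum_map. unfold forest_gf.
 rewrite <- lsum_mull.
 apply lsum_ext_in. intros f _. rewrite tweight_Node. simpl outdeg.
 destruct (Nat.eqb_spec (length f) k); [subst|]; lra.
Qed.

Lemma tree_Ngf_formula w k m :
  (k <= S m)%nat -> tree_Ngf w k (S (S m)) = w k * phi_pow_coef w (S m) (S m - k).
Proof.
 intros Hk. rewrite (tree_Ngf_S w k (S m) (S m)) by lia.
 apply (Rmult_eq_reg_l (INR (S m))); [|apply not_0_INR; lia].
 rewrite Rmult_plus_distr_l.
 rewrite (rsum_trunc (S (S m - k)) (S (S m))) by (try lia; intros d Hd; rewrite forest_Ngf_van by lia; ring).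
 rewrite (rsum_ext _ _ (fun d => w k * (INR d * w d * phi_pow_coef w m (S m - k - d)))).
 2:{ intros d Hd. rewrite forest_Ngf_formula by lia.
     replace (S m - d - k)%nat with (S m - k - d)%nat by lia. ring. }
 rewrite rsum_mull.
 transitivity (w k * (INR (S m) * forest_gf w k (S m)) + w k * (INR (S m) * rsum (S (S m - k)) (fun d => INR d * w d * phi_pow_coef w m (S m - k - d)))); [ring|].
 rewrite <- phi_pow_coef_deriv, forest_gf_cycle_lemma by lia. rewrite minus_INR by lia. ring.
Qed.

Lemma Ncount_outdeg_identity w k m :
  INR k * lsum (trees (S m)) (fun t => tweight w t * INR (Ncount k t)) =
  INR m * lsum (trees (S m)) (fun t => tweight w t * (if Nat.eqb (outdeg t) k then 1 else 0)).
Proof.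
 rewrite trees_Ncount_weight, trees_outdeg_weight. destruct (Compare_dec.le_lt_dec k m) as [Hk|Hk].
 - destruct m as [|m].
   + assert (k = 0%nat) by lia. subst. simpl. lra.
   + rewrite tree_Ngf_formula by lia.
     transitivity (w k * (INR (S m) * forest_gf w k (S m))); [|ring].
     rewrite forest_gf_cycle_lemma by lia. ring.
 - rewrite (tree_Ngf_S w k m m) by lia. rewrite forest_gf_van by lia. rewrite rsum_eq0. lra.
   intros d _. rewrite forest_Ngf_van by lia. ring.
Qed.

(** * The root degree *)

Lemma Wsum_eq w n P :
  Wsum w n P = lsum (trees n) (fun t => if excluded_middle_informative (P t) then tweight w t else 0).
Proof.
 reflexivity.
Qed.

Lemma Wsum_le w n (P Q : ptree -> Prop) :
  (forall k, 0 <= w k) -> (forall t, P t -> Q t) -> Wsum w n P <= Wsum w n Q.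
Proof.
 intros Hw H. rewrite !Wsum_eq. apply lsum_le. intros t _. pose proof (tweight_nonneg w Hw t).
 destruct (excluded_middle_informative (P t)), (excluded_middle_informative (Q t)); try lra.
 exfalso; auto.
Qed.

Lemma Wsum_nonneg w n P : (forall k, 0 <= w k) -> 0 <= Wsum w n P.
Proof.
 intros Hw. rewrite Wsum_eq. apply lsum_nonneg. intros t _. pose proof (tweight_nonneg w Hw t).
 destruct (excluded_middle_informative (P t)); lra.
Qed.

Lemma Wsum_compl w n P : Wsum w n P + Wsum w n (fun t => ~ P t) = Wsum w n (fun _ => True).
Proof.
 rewrite !Wsum_eq, <- lsum_add. apply lsum_ext_in. intros t _.
 destruct (excluded_middle_informative (P t)), (excluded_middle_informative (~ P t)), (excluded_middle_informative True); tauto || lra.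
 Qed.

Lemma high_sum_ge0 K t : 0 <= high_sum K t.
Proof.
 unfold high_sum. change (0 <= lsum (seq (S K) (tsize t)) (fun k => INR k * INR (Ncount k t))).
 apply lsum_nonneg. intros. apply Rmult_le_pos; apply pos_INR.
Qed.

Lemma outdeg_le_high_sum K t : (outdeg t > K)%nat -> INR (outdeg t) <= high_sum K t.
Proof.
 intros H. unfold high_sum.
 change (INR (outdeg t) <= lsum (seq (S K) (tsize t)) (fun k => INR k * INR (Ncount k t))).
 eapply Rle_trans; [|apply (lsum_ge_term _ _ (outdeg t))].
 - destruct t as [ts]. simpl outdeg. rewrite Ncount_Node, Nat.eqb_refl.
   rewrite <- (Rmult_1_r (INR (length ts))) at 1. apply Rmult_le_compat_l; [apply pos_INR|].
   apply (le_INR 1). lia.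
 - apply in_seq. pose proof (outdeg_lt_tsize t). lia.
 - intros. apply Rmult_le_pos; apply pos_INR.
Qed.

Lemma Wsum_outdeg_gt_high_sum w K m :
  INR m * Wsum w (S m) (fun t => (outdeg t > K)%nat) =
    lsum (trees (S m)) (fun t => tweight w t * high_sum K t).
Proof.
 rewrite (lsum_ext_in _ (fun t => tweight w t * high_sum K t)
    (fun t => lsum (seq (S K) (S m)) (fun k => tweight w t * (INR k * INR (Ncount k t))))).
 2:{ intros t Ht. apply in_trees in Ht as [Hs _]. unfold high_sum. rewrite Hs. rewrite lsum_mull.
     reflexivity. }
 rewrite lsum_exchange.
 rewrite (lsum_ext_in _ _ (fun k => INR m * lsum (trees (S m)) (fun t => tweight w t * (if Nat.eqb (outdeg t) k then 1 else 0)))).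
 2:{ intros k _. rewrite <- Ncount_outdeg_identity, <- lsum_mull. apply lsum_ext_in. intros; ring. }
 rewrite lsum_mull. f_equal. rewrite <- lsum_exchange. unfold Wsum.
 fold (lsum (trees (S m)) (fun t => if excluded_middle_informative (outdeg t > K)%nat then tweight w t else 0)).
 apply lsum_ext_in. intros t Ht. apply in_trees in Ht as [_ Hd].
 rewrite lsum_mull, lsum_seq_indicator by lia. destruct (excluded_middle_informative _); lra.
Qed.

Lemma Wsum_markov_high_sum w K m c : (forall k, 0 <= w k) -> 0 <= c ->
  c * Wsum w (S m) (fun t => c <= high_sum K t) <= INR m * Wsum w (S m) (fun t => (outdeg t > K)%nat).
Proof.
 intros Hw Hc. rewrite Wsum_outdeg_gt_high_sum, Wsum_eq, <- lsum_mull.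
 apply lsum_le. intros t _. pose proof (tweight_nonneg w Hw t).
 destruct (excluded_middle_informative (c <= high_sum K t)) as [Hct|_].
 - rewrite Rmult_comm. apply Rmult_le_compat_l; lra.
 - rewrite Rmult_0_r. apply Rmult_le_pos; [lra|apply high_sum_ge0].
Qed.

Section LargeRootDegree.

Variables (w : nat -> R) (mu : R).

Hypothesis w_ge0 : forall k, 0 <= w k.

Hypothesis mu_lt1 : mu < 1.

Definition high_sum_far (K n : nat) (e : R) (t : ptree) : Prop :=
  Rabs (high_sum K t - (1 - mu) * INR n) > e * INR n.

Lemma Wsum_outdeg_gt_lower K m e : (1 <= m)%nat -> 0 < e <= (1 - mu) / 2 ->
  Wsum w (S m) (high_sum_far K (S m) e) <= 1 / 2 * Wsum w (S m) (fun _ => True) ->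
  (1 - mu) / 4 * Wsum w (S m) (fun _ => True) <= Wsum w (S m) (fun t => (outdeg t > K)%nat).
Proof.
 intros Hm He Hfar.
 set (W := Wsum w (S m) (fun _ => True)) in *.
 set (WD := Wsum w (S m) (fun t => (outdeg t > K)%nat)).
 set (c := (1 - mu - e) * INR (S m)).
 assert (HmR : 0 < INR m) by (apply lt_0_INR; lia).
 assert (HSm : INR (S m) = INR m + 1) by apply S_INR.
 assert (Hc : (1 - mu) / 2 * INR m <= c) by (unfold c; nra).
 assert (Hc0 : 0 <= (1 - mu) / 2 * INR m) by (apply Rmult_le_pos; lra).
 assert (Hnear : W / 2 <= Wsum w (S m) (fun t => c <= high_sum K t)).
 { pose proof (Wsum_compl w (S m) (high_sum_far K (S m) e)) as Hcompl. fold W in Hcompl.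
   apply Rle_trans with (Wsum w (S m) (fun t => ~ high_sum_far K (S m) e t)); [lra|].
   apply Wsum_le; [exact w_ge0|]. intros t Hnot. unfold high_sum_far in Hnot.
   apply Rnot_gt_le in Hnot.
   pose proof (Rle_abs (- (high_sum K t - (1 - mu) * INR (S m)))) as Hab.
   rewrite Rabs_Ropp in Hab. unfold c. lra. }
 pose proof (Wsum_markov_high_sum w K m c w_ge0 ltac:(lra)) as Hmarkov. fold WD in Hmarkov.
 assert (HW : 0 <= W) by (apply Wsum_nonneg; exact w_ge0).
 apply (Rmult_le_reg_l (INR m)); [exact HmR|].
 assert ((1 - mu) / 2 * INR m * (W / 2) <= c * Wsum w (S m) (fun t => c <= high_sum K t)).
 { apply Rmult_le_compat; nra. }
 lra.
Qed.

Lemma Wsum_outdeg_large (K : nat -> nat) :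
  (forall e delta, e > 0 -> delta > 0 -> exists N, forall n, (N <= n)%nat ->
     Wsum w n (high_sum_far (K n) n e) <= delta * Wsum w n (fun _ => True)) ->
  forall eps delta, eps > 0 -> delta > 0 -> exists N, forall n, (N <= n)%nat ->
    Wsum w n (fun t => (outdeg t > K n)%nat /\ INR (outdeg t) > (1 - mu + eps) * INR n)
      <= delta * Wsum w n (fun t => (outdeg t > K n)%nat).
Proof.
 intros Hconc eps delta Heps Hdelta.
 set (e := Rmin eps ((1 - mu) / 2)). set (d := Rmin (1 / 2) (delta * (1 - mu) / 4)).
 assert (He : 0 < e <= (1 - mu) / 2) by (split; [apply Rmin_pos; lra|apply Rmin_r]).
 assert (Hd : d > 0) by (apply Rmin_pos; [lra|]; apply Rmult_lt_0_compat; [apply Rmult_lt_0_compat|]; lra).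
 pose proof (Rmin_l eps ((1 - mu) / 2)) as He_eps. fold e in He_eps.
 pose proof (Rmin_l (1 / 2) (delta * (1 - mu) / 4)) as Hd_half. fold d in Hd_half.
 pose proof (Rmin_r (1 / 2) (delta * (1 - mu) / 4)) as Hd_delta. fold d in Hd_delta.
 destruct (Hconc e d ltac:(lra) Hd) as [N HN].
 exists (Nat.max N 2). intros n Hn. specialize (HN n ltac:(lia)).
 destruct n as [|m]; [lia|].
 set (W := Wsum w (S m) (fun _ => True)) in *.
 assert (HW : 0 <= W) by (apply Wsum_nonneg; exact w_ge0).
 assert (Hsub : Wsum w (S m) (fun t => (outdeg t > K (S m))%nat /\ INR (outdeg t) > (1 - mu + eps) * INR (S m))
     <= Wsum w (S m) (high_sum_far (K (S m)) (S m) e)).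
 { apply Wsum_le; [exact w_ge0|]. intros t [Hgt Hbig]. unfold high_sum_far.
   pose proof (outdeg_le_high_sum _ _ Hgt).
   assert (e * INR (S m) <= eps * INR (S m)) by (apply Rmult_le_compat_r; [apply pos_INR|lra]).
   eapply Rlt_le_trans; [|apply Rle_abs]. lra. }
 assert (Hhalf : Wsum w (S m) (high_sum_far (K (S m)) (S m) e) <= 1 / 2 * W)
   by (eapply Rle_trans; [exact HN|apply Rmult_le_compat_r; lra]).
 pose proof (Wsum_outdeg_gt_lower (K (S m)) m e ltac:(lia) He Hhalf) as Hlower.
 fold W in Hlower.
 assert (d * W <= delta * (1 - mu) / 4 * W) by (apply Rmult_le_compat_r; lra).
 assert (delta * ((1 - mu) / 4 * W) <= delta * Wsum w (S m) (fun t => (outdeg t > K (S m))%nat))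
   by (apply Rmult_le_compat_l; lra).
 lra.
Qed.

End LargeRootDegree.

(** * Diagonal extraction *)

(* [incr_majorant N] is a strictly increasing majorant of [N], and [index_below M n]
   is (roughly) the largest [j] with [M j <= n], a slowly growing inverse of [M]. *)

Fixpoint incr_majorant (N : nat -> nat) (i : nat) : nat :=
  match i with O => N O | S i' => S (Nat.max (incr_majorant N i') (N (S i'))) end.

Fixpoint index_below (M : nat -> nat) (n : nat) : nat :=
  match n with
  | O => O
  | S n' => if Nat.leb (M (S (index_below M n'))) (S n') then S (index_below M n') else index_below M n'
  end.

Lemma incr_majorant_ge N i : (N i <= incr_majorant N i)%nat.
Proof.
 destruct i; simpl; lia.
Qed.

Lemma incr_majorant_lt N i : (incr_majorant N i < incr_majorant N (S i))%nat.
Proof.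
 simpl. lia.
Qed.

Lemma index_below_spec M n : index_below M n = O \/ (M (index_below M n) <= n)%nat.
Proof.
 induction n as [|n IH]; [left; reflexivity|]. simpl.
 destruct (Nat.leb_spec (M (S (index_below M n))) (S n)); [right; auto|].
 destruct IH as [->|IH]; [left; reflexivity|right; lia].
Qed.

Lemma index_below_ge M : (forall i, (M i < M (S i))%nat) ->
  forall n j, (M j <= n)%nat -> (j <= index_below M n)%nat.
Proof.
 intros HM. induction n as [|n IH]; intros j Hj.
 - destruct j; [lia|]. specialize (HM j). lia.
 - destruct j; [lia|].
   assert (Hj' : (M j <= n)%nat) by (specialize (HM j); lia).
   specialize (IH j Hj').
   assert (Hmono : (index_below M n <= index_below M (S n))%nat)
     by (simpl; destruct (Nat.leb _ _); lia).
   destruct (Nat.eq_dec (index_below M n) j) as [E|E]; [|lia].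
   simpl. rewrite E. destruct (Nat.leb_spec (M (S j)) (S n)); lia.
Qed.

Lemma diagonal_index (P : nat -> nat -> Prop) :
  (forall i, exists N, forall n, (N <= n)%nat -> P i n) ->
  exists g : nat -> nat, nat_to_infty g /\ exists N, forall n, (N <= n)%nat -> P (g n) n.
Proof.
 intros HP.
 set (N := fun i => proj1_sig (constructive_indefinite_description _ (HP i))).
 assert (HN : forall i n, (N i <= n)%nat -> P i n).
 { intros i. unfold N. destruct (constructive_indefinite_description _ (HP i)) as [Ni HNi]. exact HNi. }
 set (M := incr_majorant N).
 assert (HM : forall i, (M i < M (S i))%nat) by apply incr_majorant_lt.
 exists (index_below M). split.
 - intros j. exists (M j). intros n Hn. apply index_below_ge; auto.
 - exists (M 1%nat). intros n Hn. pose proof (index_below_ge M HM n 1 Hn).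
   destruct (index_below_spec M n) as [E|E]; [lia|].
   apply HN. pose proof (incr_majorant_ge N (index_below M n)) as HNM. fold M in HNM. lia.
Qed.

Lemma inv_INR_S_cv0 (g : nat -> nat) : nat_to_infty g -> Un_cv (fun n => / INR (S (g n))) 0.
Proof.
 intros Hg eps Heps. destruct (INR_archimed eps 1 Heps) as [j Hj].
 destruct (Hg j) as [N HN]. exists N. intros n Hn. specialize (HN n Hn).
 unfold R_dist. rewrite Rminus_0_r.
 assert (HS : INR j <= INR (S (g n))) by (apply le_INR; lia).
 assert (HSp : 0 < INR (S (g n))) by (apply lt_0_INR; lia).
 rewrite Rabs_right by (left; apply Rinv_0_lt_compat; exact HSp).
 apply (Rmult_lt_reg_l (INR (S (g n)))); [exact HSp|]. rewrite Rinv_r by lra. nra.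
Qed.

Theorem lemma6p3 (w : nat -> R) (mu : R) (Omega : nat -> nat) :
  weight_seq w ->
  (typeII w mu \/ (typeIII w /\ mu = 0)) ->
  nat_to_infty Omega ->
  (forall eps, eps > 0 -> exists N, forall n, (N <= n)%nat -> INR (Omega n) <= eps * INR n) ->
  (forall K : nat -> nat, nat_to_infty K -> (forall n, (K n <= Omega n)%nat) ->
     forall eps delta, eps > 0 -> delta > 0 -> exists N, forall n, (N <= n)%nat ->
       Wsum w n (fun t => Rabs (low_sum (K n) t - mu * INR n) > eps * INR n)
         <= delta * Wsum w n (fun _ => True) /\
       Wsum w n (fun t => Rabs (high_sum (K n) t - (1 - mu) * INR n) > eps * INR n)
         <= delta * Wsum w n (fun _ => True)) ->
  exists tn : nat -> R, Un_cv tn 0 /\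
    forall delta, delta > 0 -> exists N, forall n, (N <= n)%nat ->
      Wsum w n (fun t => (outdeg t > Omega n)%nat /\ INR (outdeg t) > (1 - mu + tn n) * INR n)
        <= delta * Wsum w n (fun t => (outdeg t > Omega n)%nat).
Proof.
 intros [Hw _] Htype HOm _ Hconc.
 assert (Hmu : mu < 1) by (destruct Htype as [[[_ H] _]|[_ ->]]; lra).
 assert (Hhigh : forall e delta, e > 0 -> delta > 0 -> exists N, forall n, (N <= n)%nat ->
     Wsum w n (high_sum_far mu (Omega n) n e) <= delta * Wsum w n (fun _ => True)).
 { intros e delta He Hd. destruct (Hconc Omega HOm (fun n => le_n _) e delta He Hd) as [N HN].
   exists N. intros n Hn. apply (HN n Hn). }
 assert (Hpos : forall i, / INR (S i) > 0) by (intros i; apply Rinv_0_lt_compat, lt_0_INR; lia).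
 destruct (diagonal_index (fun i n =>
     Wsum w n (fun t => (outdeg t > Omega n)%nat /\ INR (outdeg t) > (1 - mu + / INR (S i)) * INR n)
       <= / INR (S i) * Wsum w n (fun t => (outdeg t > Omega n)%nat)))
   as [g [Hg [N HN]]].
 { intros i. apply (Wsum_outdeg_large w mu Hw Hmu Omega Hhigh); apply Hpos. }
 exists (fun n => / INR (S (g n))). split; [apply inv_INR_S_cv0, Hg|].
 intros delta Hdelta. destruct (inv_INR_S_cv0 g Hg delta Hdelta) as [N' HN'].
 exists (Nat.max N N'). intros n Hn.
 eapply Rle_trans; [apply HN; lia|]. apply Rmult_le_compat_r; [apply Wsum_nonneg, Hw|].
 specialize (HN' n ltac:(lia)). unfold R_dist in HN'.
 rewrite Rminus_0_r, Rabs_right in HN' by (left; apply Hpos).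
 lra.
Qed.
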